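(* Let $n\ge2$, $\omega\in\mathbb{R}^n$, $k\in\mathbb{R}_{>0}^n$ satisfy (IC1) $\sum_\mu\omega_\mu=0$, (IC2) $\omega\ne0$, (IC3) $\left|\frac{\omega_1}{k_1}\right|\le\cdots\le\left|\frac{\omega_n}{k_n}\right|$. Let $\sigma\in\{-1,+1\}^n$ and $f_\sigma(R)=-R+\frac1n\sum_{\mu=1}^n\sigma_\mu\sqrt{k_\mu^2R-\omega_\mu^2}$. Then $f_\sigma$ has no positive roots if and only if $f_\sigma(R)<0$ for all $R\in\left[\left(\frac{\omega_n}{k_n}\right)^2,\infty\right)$.
   Context: Square roots are nonnegative real square roots; a positive root of $f_\sigma$ is a real $R>0$ with $k_\mu^2R-\omega_\mu^2\ge0$ for all $\mu$ and $f_\sigma(R)=0$. *)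

(* concrete reals R. Vectors in R^n are functions nat -> R,
   with indices 0..n-1 standing for the paper's 1..n. *)
From Stdlib Require Import Reals.
Open Scope R_scope.

Definition rsum (n : nat) (a : nat -> R) : R :=
  match n with O => 0 | S m => sum_f_R0 a m end.

Definition f_sigma (n : nat) (omega k sigma : nat -> R) (x : R) : R :=
  - x + / INR n * rsum n (fun mu => sigma mu * sqrt (k mu ^ 2 * x - omega mu ^ 2)).

Definition is_positive_root (n : nat) (omega k sigma : nat -> R) (x : R) : Prop :=
  0 < x /\ (forall mu, (mu < n)%nat -> 0 <= k mu ^ 2 * x - omega mu ^ 2) /\
  f_sigma n omega k sigma x = 0.

(* A positive root R of f_sigma makes the last radicand nonnegative, i.e. R >= (omega_n/k_n)^2,
   so negativity of f_sigma on that half-line rules out roots.  Conversely, by (IC3) every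
   radicand is nonnegative on the half-line, and f_sigma(R) <= -R + c sqrt R tends to -oo;
   hence a point of the half-line where f_sigma >= 0 yields a root there by the intermediate
   value theorem, and it is positive because (IC2) makes the left end (omega_n/k_n)^2 positive. *)

From Stdlib Require Import Reals Lra Lia Psatz.
From Coquelicot Require Import Coquelicot.
Open Scope R_scope.

Lemma rsum_S m a : rsum (S m) a = rsum m a + a m.
Proof. destruct m; simpl; [ring | reflexivity]. Qed.

Lemma rsum_le m a b :
  (forall mu, (mu < m)%nat -> a mu <= b mu) -> rsum m a <= rsum m b.
Proof.
  induction m as [|m IH]; intros Hab; [simpl; lra|].
  rewrite !rsum_S.
  assert (rsum m a <= rsum m b) by (apply IH; intros; apply Hab; lia).
  assert (a m <= b m) by (apply Hab; lia).
  lra.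
Qed.

Lemma rsum_nonneg m a : (forall mu, (mu < m)%nat -> 0 <= a mu) -> 0 <= rsum m a.
Proof.
  induction m as [|m IH]; intros Ha; [simpl; lra|].
  rewrite rsum_S.
  assert (0 <= rsum m a) by (apply IH; intros; apply Ha; lia).
  assert (0 <= a m) by (apply Ha; lia).
  lra.
Qed.

Lemma rsum_mult_r m a c : rsum m (fun mu => a mu * c) = rsum m a * c.
Proof. induction m as [|m IH]; [simpl; ring|]. rewrite !rsum_S, IH. ring. Qed.

Lemma continuity_pt_rsum m (g : nat -> R -> R) x :
  (forall mu, continuity_pt (g mu) x) -> continuity_pt (fun y => rsum m (fun mu => g mu y)) x.
Proof.
  intros Hg; induction m as [|m IH].
  - now apply continuity_pt_const.
  - apply (continuity_pt_ext (fun y => rsum m (fun mu => g mu y) + g m y)).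
    + intros y; now rewrite rsum_S.
    + now apply (continuity_pt_plus (fun y => rsum m (fun mu => g mu y))).
Qed.

Lemma continuity_pt_sqrt_total x : continuity_pt sqrt x.
Proof. apply continuity_pt_filterlim, continuous_sqrt. Qed.

Lemma continuity_f_sigma n omega k sigma : continuity (f_sigma n omega k sigma).
Proof.
  intros x; unfold f_sigma.
  apply (continuity_pt_plus (fun y => - y)).
  - apply continuity_pt_opp, continuity_pt_id.
  - apply (continuity_pt_mult (fun _ => / INR n)); [now apply continuity_pt_const|].
    apply continuity_pt_rsum; intros mu.
    apply (continuity_pt_mult (fun _ => sigma mu)); [now apply continuity_pt_const|].
    apply (continuity_pt_comp (fun y => k mu ^ 2 * y - omega mu ^ 2) sqrt);
      [|apply continuity_pt_sqrt_total].
    apply (continuity_pt_minus (fun y => k mu ^ 2 * y)); [|now apply continuity_pt_const].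
    apply (continuity_pt_mult (fun _ => k mu ^ 2)); [now apply continuity_pt_const|].
    apply continuity_pt_id.
Qed.

Lemma le_last_of_nondecreasing n (a : nat -> R) :
  (forall mu, (S mu < n)%nat -> a mu <= a (S mu)) ->
  forall mu, (mu < n)%nat -> a mu <= a (pred n).
Proof.
  intros Ha mu Hmu.
  remember (pred n - mu)%nat as d eqn:Hd; revert mu Hmu Hd.
  induction d as [|d IH]; intros mu Hmu Hd.
  - replace mu with (pred n) by lia; lra.
  - apply (Rle_trans _ (a (S mu))); [apply Ha; lia | apply IH; lia].
Qed.

Lemma radicand_nonneg_iff w c x :
  c <> 0 -> 0 <= c ^ 2 * x - w ^ 2 <-> (w / c) ^ 2 <= x.
Proof.
  intros Hc.
  assert (Hc2 : 0 < c ^ 2) by (apply pow2_gt_0; exact Hc).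
  replace (c ^ 2 * x - w ^ 2) with (c ^ 2 * (x - (w / c) ^ 2)) by (field; exact Hc).
  split; intros H.
  - destruct (Rle_or_lt ((w / c) ^ 2) x) as [|Hlt]; [assumption|].
    assert (0 < c ^ 2 * ((w / c) ^ 2 - x)) by (apply Rmult_lt_0_compat; lra).
    lra.
  - apply Rmult_le_pos; lra.
Qed.

Lemma sqrt_radicand_le w c x : 0 <= c -> 0 <= x -> sqrt (c ^ 2 * x - w ^ 2) <= c * sqrt x.
Proof.
  intros Hc Hx.
  rewrite <- (sqrt_pow2 c Hc) at 2; rewrite <- sqrt_mult_alt by nra.
  apply sqrt_le_1_alt; pose proof (pow2_ge_0 w); lra.
Qed.

Section Radicands.

Variables (n : nat) (omega k : nat -> R).
Hypothesis Hk : forall mu, (mu < n)%nat -> 0 < k mu.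
Hypothesis IC3 : forall mu, (S mu < n)%nat ->
  Rabs (omega mu / k mu) <= Rabs (omega (S mu) / k (S mu)).

Lemma ratio_sq_le_last mu : (mu < n)%nat ->
  (omega mu / k mu) ^ 2 <= (omega (pred n) / k (pred n)) ^ 2.
Proof.
  intros Hmu.
  pose proof (le_last_of_nondecreasing n (fun mu => Rabs (omega mu / k mu)) IC3 mu Hmu).
  rewrite <- (pow2_abs (omega mu / k mu)), <- (pow2_abs (omega (pred n) / k (pred n))).
  pose proof (Rabs_pos (omega mu / k mu)); nra.
Qed.

Lemma radicands_nonneg x : (omega (pred n) / k (pred n)) ^ 2 <= x ->
  forall mu, (mu < n)%nat -> 0 <= k mu ^ 2 * x - omega mu ^ 2.
Proof.
  intros Hx mu Hmu.
  assert (k mu <> 0) by (pose proof (Hk mu Hmu); lra).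
  apply radicand_nonneg_iff; [assumption|].
  pose proof (ratio_sq_le_last mu Hmu); lra.
Qed.

Lemma last_ratio_sq_pos : (exists mu, (mu < n)%nat /\ omega mu <> 0) ->
  0 < (omega (pred n) / k (pred n)) ^ 2.
Proof.
  intros [mu [Hmu Hw]].
  assert (Hkmu : k mu <> 0) by (pose proof (Hk mu Hmu); lra).
  assert (Hratio : omega mu / k mu <> 0) by (unfold Rdiv; apply Rmult_integral_contrapositive;
    split; [exact Hw | now apply Rinv_neq_0_compat]).
  pose proof (pow2_gt_0 _ Hratio); pose proof (ratio_sq_le_last mu Hmu); lra.
Qed.

End Radicands.

Section Asymptotics.

Variables (n : nat) (omega k sigma : nat -> R).
Hypothesis Hn : (0 < n)%nat.
Hypothesis Hk : forall mu, (mu < n)%nat -> 0 <= k mu.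
Hypothesis Hsigma : forall mu, (mu < n)%nat -> Rabs (sigma mu) <= 1.

Lemma f_sigma_le_sqrt x : 0 <= x ->
  f_sigma n omega k sigma x <= - x + rsum n k / INR n * sqrt x.
Proof.
  intros Hx; unfold f_sigma.
  assert (Hn' : 0 < / INR n) by (apply Rinv_0_lt_compat, lt_0_INR; exact Hn).
  assert (rsum n (fun mu => sigma mu * sqrt (k mu ^ 2 * x - omega mu ^ 2))
          <= rsum n k * sqrt x).
  { rewrite <- rsum_mult_r; apply rsum_le; intros mu Hmu.
    pose proof (sqrt_radicand_le (omega mu) (k mu) x (Hk mu Hmu) Hx).
    pose proof (sqrt_pos (k mu ^ 2 * x - omega mu ^ 2)).
    pose proof (Hsigma mu Hmu) as Hs; apply Rabs_le_between in Hs.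
    nra. }
  unfold Rdiv; nra.
Qed.

Lemma f_sigma_eventually_neg x : exists X, x < X /\ f_sigma n omega k sigma X < 0.
Proof.
  set (c := rsum n k / INR n).
  assert (Hc : 0 <= c).
  { apply Rmult_le_pos; [now apply rsum_nonneg|].
    left; apply Rinv_0_lt_compat, lt_0_INR; exact Hn. }
  set (s := c + Rabs x + 1).
  assert (Hxs : x < s) by (unfold s; pose proof (Rle_abs x); lra).
  assert (Hs : 1 <= s) by (unfold s; pose proof (Rabs_pos x); lra).
  exists (s ^ 2); split; [nra|].
  pose proof (f_sigma_le_sqrt (s ^ 2) ltac:(nra)) as Hf.
  rewrite sqrt_pow2 in Hf by lra; fold c in Hf.
  assert (c < s) by (unfold s; pose proof (Rabs_pos x); lra).
  nra.
Qed.

End Asymptotics.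

Theorem lemma1 (n : nat) (omega k sigma : nat -> R)
  (Hn : (2 <= n)%nat)
  (Hk : forall mu, (mu < n)%nat -> 0 < k mu)
  (IC1 : rsum n omega = 0)
  (IC2 : exists mu, (mu < n)%nat /\ omega mu <> 0)
  (IC3 : forall mu, (S mu < n)%nat ->
           Rabs (omega mu / k mu) <= Rabs (omega (S mu) / k (S mu)))
  (Hsigma : forall mu, (mu < n)%nat -> sigma mu = 1 \/ sigma mu = -1) :
  (~ exists x, is_positive_root n omega k sigma x) <->
  (forall x, (omega (pred n) / k (pred n)) ^ 2 <= x -> f_sigma n omega k sigma x < 0).
Proof.
  assert (Hlast : (pred n < n)%nat) by lia.
  split.
  - intros Hno x Hx.
    destruct (Rlt_or_le (f_sigma n omega k sigma x) 0) as [Hlt | Hge]; [exact Hlt|].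
    exfalso; apply Hno.
    assert (Hsigma1 : forall mu, (mu < n)%nat -> Rabs (sigma mu) <= 1).
    { intros mu Hmu; destruct (Hsigma mu Hmu) as [-> | ->];
        rewrite ?Rabs_R1, ?Rabs_m1; lra. }
    destruct (f_sigma_eventually_neg n omega k sigma ltac:(lia)
                (fun mu Hmu => Rlt_le _ _ (Hk mu Hmu)) Hsigma1 x) as [X [HxX HfX]].
    destruct (IVT_cor _ x X (continuity_f_sigma n omega k sigma) ltac:(lra)
                ltac:(nra)) as [z [Hz Hfz]].
    pose proof (last_ratio_sq_pos n omega k Hk IC3 IC2).
    exists z; split; [lra | split; [|exact Hfz]].
    apply (radicands_nonneg n omega k Hk IC3); lra.
  - intros Hneg [x [_ [Hrad Hfx]]].
    assert (Hk_last : k (pred n) <> 0) by (pose proof (Hk _ Hlast); lra).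
    pose proof (Hneg x (proj1 (radicand_nonneg_iff _ _ _ Hk_last) (Hrad _ Hlast))).
    lra.
Qed.
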